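(* Let $\mathcal A\in\mathbb C^{n_1\times n_1\times n_3}$ with $\mathrm{ind}(\mathcal A)=k$ and let $\mathcal A^-$ be a fixed element of $\mathcal A\{1\}$. Then: (a) $\mathcal A^{-,D}\mathcal A=\mathcal A^-\mathcal A$ if and only if $\mathcal A\mathcal A^D\mathcal A=\mathcal A$; (b) $\mathcal A^{-,D}\mathcal A=\mathcal A^D\mathcal A$ if and only if $\mathcal A^{-,D}=\mathcal A^D$; (c) $\mathcal A^k\mathcal A^-\mathcal A^k=\mathcal A^k$ if and only if $\mathcal A^k\mathcal A^{-,D}\mathcal A^k=\mathcal A^k$; (d) $\mathcal A^{-,D}=\mathcal A^D$ if and only if $\mathcal A^{-,D}\mathcal A=\mathcal A\mathcal A^{-,D}$.
   Context: Fix a nonsingular matrix $M\in\mathbb C^{n_3\times n_3}$. For $\mathcal C\in\mathbb C^{n_1\times n_2\times n_3}$ let $\widehat{\mathcal C}=\mathcal C\times_3M$, i.e. $\widehat{\mathcal C}_{ijk}=\sum_{l=1}^{n_3}M_{kl}\mathcal C_{ijl}$, and let $\widehat{\mathcal C}^{(i)}$ denote its $i$-th frontal slice. The M-product $\mathcal C\star_M\mathcal D$ of $\mathcal C\in\mathbb C^{n_1\times n_2\times n_3}$ and $\mathcal D\in\mathbb C^{n_2\times l\times n_3}$ is the unique tensor with $\widehat{\mathcal C\star_M\mathcal D}^{(i)}=\widehat{\mathcal C}^{(i)}\widehat{\mathcal D}^{(i)}$ for all $i\in[n_3]$. Juxtaposition of tensors denotes the M-product; powers are M-product powers with $\mathcal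 A^0=\mathcal I$ where $\widehat{\mathcal I}^{(i)}=I_{n_1}$. $\mathcal A\{1\}$ is the set of all $\mathcal W$ with $\mathcal A\mathcal W\mathcal A=\mathcal A$. The index $\mathrm{ind}(\mathcal A)$ is $\max_{i}\mathrm{ind}(\widehat{\mathcal A}^{(i)})$, where the index of a square matrix $B$ is the least $k\ge0$ with $\mathrm{rank}(B^{k+1})=\mathrm{rank}(B^k)$. For $\mathrm{ind}(\mathcal A)=k$, the Drazin inverse $\mathcal A^D$ is the unique $\mathcal W$ with $\mathcal W\mathcal A^{k+1}=\mathcal A^k$, $\mathcal W\mathcal A\mathcal W=\mathcal W$, $\mathcal A\mathcal W=\mathcal W\mathcal A$. The 1-D inverse is $\mathcal A^{-,D}=\mathcal A^-\mathcal A\mathcal A^D$. *)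

From HB Require Import structures.
From mathcomp Require Import all_boot all_order all_algebra.
From mathcomp Require Import reals.
From mathcomp.real_closed Require Import complex.
Set Implicit Arguments. Unset Strict Implicit. Unset Printing Implicit Defensive.
Import Order.TTheory GRing.Theory Num.Theory.
Local Open Scope ring_scope.

(* Third-order tensors C^{n1 x n2 x n3} are represented by their n3 frontal
   slices: a finite function 'I_n3 -> 'M[F]_(n1,n2). *)
Definition tensor (F : Type) (n1 n2 n3 : nat) := {ffun 'I_n3 -> 'M[F]_(n1, n2)}.

Section Tensors.
Variable F : fieldType.

Definition tmode3 (n1 n2 n3 : nat) (M : 'M[F]_n3) (C : tensor F n1 n2 n3)
  : tensor F n1 n2 n3 := [ffun k => \sum_l M k l *: C l].

(* M-product: the unique tensor whose transformed slices are the products of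
   the transformed slices (M nonsingular, so we transform back with M^-1). *)
Definition mprod (n1 n2 l n3 : nat) (M : 'M[F]_n3)
  (C : tensor F n1 n2 n3) (D : tensor F n2 l n3) : tensor F n1 l n3 :=
  tmode3 (invmx M) [ffun i => tmode3 M C i *m tmode3 M D i].

Definition tid (n1 n3 : nat) (M : 'M[F]_n3) : tensor F n1 n1 n3 :=
  tmode3 (invmx M) [ffun _ => 1%:M].

Fixpoint tpow (n1 n3 : nat) (M : 'M[F]_n3) (A : tensor F n1 n1 n3) (k : nat)
  : tensor F n1 n1 n3 :=
  match k with
  | 0 => tid n1 M
  | k'.+1 => mprod M A (tpow M A k')
  end.

(* index of a square matrix: least k >= 0 with rank(B^(k+1)) = rank(B^k);
   such k always exists and is <= n, so searching in [0, n] is exhaustive. *)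
Definition mx_index (n : nat) (B : 'M[F]_n) : nat :=
  find (fun k => \rank (B ^+ k.+1) == \rank (B ^+ k)) (iota 0 n.+1).

Definition tindex (n1 n3 : nat) (M : 'M[F]_n3) (A : tensor F n1 n1 n3) : nat :=
  \max_(i < n3) mx_index (tmode3 M A i).

Definition is_inner_inverse (n1 n3 : nat) (M : 'M[F]_n3)
  (A W : tensor F n1 n1 n3) : Prop :=
  mprod M (mprod M A W) A = A.

Definition is_drazin (n1 n3 : nat) (M : 'M[F]_n3)
  (A W : tensor F n1 n1 n3) : Prop :=
  let k := tindex M A in
  [/\ mprod M W (tpow M A k.+1) = tpow M A k,
      mprod M (mprod M W A) W = W &
      mprod M A W = mprod M W A].

Definition one_drazin (n1 n3 : nat) (M : 'M[F]_n3)
  (A Am AD : tensor F n1 n1 n3) : tensor F n1 n1 n3 :=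
  mprod M (mprod M Am A) AD.

End Tensors.

From HB Require Import structures.
From mathcomp Require Import all_boot all_order all_algebra.
From mathcomp Require Import reals.
From mathcomp.real_closed Require Import complex.

Set Implicit Arguments.
Unset Strict Implicit.
Unset Printing Implicit Defensive.
Import Order.TTheory GRing.Theory Num.Theory.
Local Open Scope ring_scope.

(* The M-product is associative, so all four equivalences are identities in an
   arbitrary semigroup, using only A A^- A = A, the three Drazin equations and
   their consequence A A^D A^k = A^k (commute A^D past A). *)

Section MProduct.
Variable F : fieldType.

Lemma tmode3_mulmx (n1 n2 n3 : nat) (P Q : 'M[F]_n3) (T : tensor F n1 n2 n3) :
  tmode3 P (tmode3 Q T) = tmode3 (P *m Q) T.
Proof.
apply/ffunP => k; rewrite !ffunE.
under eq_bigr => l _ do rewrite ffunE scaler_sumr.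
rewrite exchange_big /=; apply: eq_bigr => m _.
rewrite mxE scaler_suml; apply: eq_bigr => l _.
by rewrite scalerA.
Qed.

Lemma tmode3_1 (n1 n2 n3 : nat) (T : tensor F n1 n2 n3) : tmode3 1%:M T = T.
Proof.
apply/ffunP => k; rewrite ffunE (bigD1 k) //= big1 ?addr0.
  by rewrite mxE eqxx scale1r.
by move=> l /negPf; rewrite mxE eq_sym => ->; rewrite scale0r.
Qed.

Lemma tmode3_mprod (n1 n2 l n3 : nat) (M : 'M[F]_n3) (C : tensor F n1 n2 n3)
    (D : tensor F n2 l n3) :
  M \in unitmx ->
  tmode3 M (mprod M C D) = [ffun i => tmode3 M C i *m tmode3 M D i].
Proof. by move=> Mu; rewrite /mprod tmode3_mulmx mulmxV // tmode3_1. Qed.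

Lemma mprodA (n1 n2 n3 n4 n : nat) (M : 'M[F]_n) (A : tensor F n1 n2 n)
    (B : tensor F n2 n3 n) (C : tensor F n3 n4 n) :
  M \in unitmx -> mprod M (mprod M A B) C = mprod M A (mprod M B C).
Proof.
move=> Mu; rewrite [LHS]/mprod [RHS]/mprod !tmode3_mprod //; congr tmode3.
by apply/ffunP => i; rewrite !ffunE mulmxA.
Qed.

End MProduct.

Section OneDrazinSemigroup.
Variables (T : Type) (mul : T -> T -> T).
Local Notation "x ** y" := (mul x y) (at level 40, left associativity).
Hypothesis mulA : associative mul.

Variables (A Am AD P : T).
Hypothesis inner : A ** Am ** A = A.
Hypothesis drazin_pow : AD ** (A ** P) = P.
Hypothesis drazin_outer : AD ** A ** AD = AD.
Hypothesis drazin_comm : A ** AD = AD ** A.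

Local Notation AmD := (Am ** A ** AD).

Lemma drazin_core : A ** AD ** P = P.
Proof. by rewrite drazin_comm -mulA. Qed.

Lemma one_drazin_mulr_eq_inner : AmD ** A = Am ** A <-> A ** AD ** A = A.
Proof.
split => [AmDA | ADcore]; last by rewrite -!mulA (mulA A AD) ADcore.
have -> : A ** AD ** A = A ** (AmD ** A) by rewrite !mulA inner.
by rewrite AmDA mulA inner.
Qed.

Lemma one_drazin_mulr_eq_drazin : AmD ** A = AD ** A <-> AmD = AD.
Proof.
split => [AmDA | -> //].
by rewrite -{2}drazin_outer -AmDA -!mulA (mulA AD) drazin_outer.
Qed.

Lemma core_inner_one_drazin : P ** Am ** P = P <-> P ** AmD ** P = P.
Proof. by rewrite -!mulA (mulA A) drazin_core. Qed.

Lemma one_drazin_eq_drazin_commute : AmD = AD <-> AmD ** A = A ** AmD.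
Proof.
split => [-> | AmD_comm]; first by rewrite drazin_comm.
apply/one_drazin_mulr_eq_drazin.
by rewrite AmD_comm !mulA inner drazin_comm.
Qed.

End OneDrazinSemigroup.

Theorem theorem3p8 (R : realType) (n1 n3 : nat) (M : 'M[complex R]_n3)
  (A Am AD : tensor (complex R) n1 n1 n3) (k : nat) :
  M \in unitmx ->
  tindex M A = k ->
  is_inner_inverse M A Am ->
  is_drazin M A AD ->
  let AmD := one_drazin M A Am AD in
  [/\ (mprod M AmD A = mprod M Am A <-> mprod M (mprod M A AD) A = A),
      (mprod M AmD A = mprod M AD A <-> AmD = AD),
      (mprod M (mprod M (tpow M A k) Am) (tpow M A k) = tpow M A k <->
       mprod M (mprod M (tpow M A k) AmD) (tpow M A k) = tpow M A k) &
      (AmD = AD <-> mprod M AmD A = mprod M A AmD)].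
Proof.
move=> Mu Hk inner []; rewrite Hk => drazin_pow drazin_outer drazin_comm AmD.
rewrite {}/AmD /one_drazin.
have mulA : associative (@mprod _ n1 n1 n1 n3 M) by move=> X Y Z; rewrite mprodA.
split.
- exact (one_drazin_mulr_eq_inner mulA AD inner).
- exact (one_drazin_mulr_eq_drazin mulA Am drazin_outer).
- exact (core_inner_one_drazin mulA Am drazin_pow drazin_comm).
- exact (one_drazin_eq_drazin_commute mulA inner drazin_outer drazin_comm).
Qed.
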